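(* (a) At an equilibrium point $D$, $\min_{S\in\mathcal C}C_S=C_{\{s_0\}}=1$. (b) A vector $D\in\mathbb R^E_{\ge0}$ is an equilibrium point if and only if $D=|Q|$ for some $s_0$-$s_1$ flow $Q$ of value $1$ with the following property: orienting every edge in the direction of $Q$ and deleting the edges with $Q_e=0$, all directed $s_0$-$s_1$ paths in the resulting directed graph have the same length. In particular, if no two distinct $s_0$-$s_1$ paths in $G$ have the same length, the equilibria are precisely the vectors that equal $1$ on the edges of a simple $s_0$-$s_1$ path and $0$ elsewhere.
   Context: Let $G=(N,E)$ be a finite connected undirected graph with two distinct vertices $s_0$ (source) and $s_1$ (sink). Each edge $e$ has a fixed length $L_e>0$ and a diameter $D_e\ge 0$; edges with $D_e=0$ are treated as absent (conductance $D_e/L_e=0$). Given $D$, the potentials $p_v$ solve $\sum_{u\in\delta(v)}(p_v-p_u)D_{uv}/L_{uv}=b_v$ with $b_{s_0}=1$, $b_{s_1}=-1$, $b_v=0$ otherwise ($\delta(v)$ the neighbours of $v$), and $Q_e=D_e(p_u-p_v)/L_e$ for $e=\{u,v\}$ with a fixed orientation $(u,v)$ (the electrical $s_0$-$s_1$ flow of value 1). $D$ is an equilibrium point of the dynamics $\dot D_e=|Q_e|-D_e$ if $D_e=|Q_e|$ for all $e$. For $S\subseteq N$, $\delta(S)$ is the set of edges with exactly one endpoint in $S$; $\mathcal C$ is the set of $S\subseteq N$ with $s_0\in S$, $s_1\notin S$; $C_S=\sum_{e\in\delta(S)}D_e$. The length of a path is the sum of $L_e$ over its edges.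
   Formalization: In (b), the flow Q of value 1 is also acyclic, so orienting every edge in the direction of Q and deleting the edges with $Q_e=0$ leaves a directed graph without directed cycles. The statement above fails without it. *)

From HB Require Import structures.
From mathcomp Require Import all_boot all_order all_algebra.
Set Implicit Arguments. Unset Strict Implicit. Unset Printing Implicit Defensive.
Import Order.TTheory GRing.Theory Num.Theory.
Local Open Scope ring_scope.

Section Physarum.
Variables (R : realFieldType) (N E : finType) (src tgt : E -> N).
Variables (L : E -> R) (s0 s1 : N).

Definition links (e : E) (x y : N) : bool :=
  ((src e == x) && (tgt e == y)) || ((src e == y) && (tgt e == x)).

Definition adj : rel N := fun x y => [exists e, links e x y].
Definition connected_graph : Prop := forall x y : N, connect adj x y.

Definition bvec (v : N) : R :=
  if v == s0 then 1 else if v == s1 then -1 else 0.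

Definition potential_eqs (D : E -> R) (p : N -> R) : Prop :=
  forall v : N,
    \sum_(e | src e == v) (p v - p (tgt e)) * (D e / L e)
  + \sum_(e | tgt e == v) (p v - p (src e)) * (D e / L e) = bvec v.

Definition elec_flow (D : E -> R) (p : N -> R) (e : E) : R :=
  D e * (p (src e) - p (tgt e)) / L e.

(* equilibrium point of dD/dt = |Q| - D *)
Definition equilibrium (D : E -> R) : Prop :=
  exists p : N -> R, potential_eqs D p /\ forall e, D e = `|elec_flow D p e|.

Definition cut (D : E -> R) (S : {set N}) : R :=
  \sum_(e | (src e \in S) != (tgt e \in S)) D e.

Definition st_flow (Q : E -> R) : Prop :=
  forall v : N,
    \sum_(e | src e == v) Q e - \sum_(e | tgt e == v) Q e = bvec v.

Definition plen (es : seq E) : R := \sum_(e <- es) L e.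

Fixpoint uwalk (x : N) (vs : seq N) (es : seq E) : bool :=
  match vs, es with
  | [::], [::] => true
  | v :: vs', e :: es' => links e x v && uwalk v vs' es'
  | _, _ => false
  end.

Definition upath (vs : seq N) (es : seq E) : bool :=
  [&& uwalk s0 vs es, last s0 vs == s1 & uniq (s0 :: vs)].

Definition dlink (Q : E -> R) (e : E) (x y : N) : bool :=
  (Q e != 0) &&
  (if 0 < Q e then (src e == x) && (tgt e == y)
   else (tgt e == x) && (src e == y)).

Fixpoint dwalk (Q : E -> R) (x : N) (vs : seq N) (es : seq E) : bool :=
  match vs, es with
  | [::], [::] => true
  | v :: vs', e :: es' => dlink Q e x v && dwalk Q v vs' es'
  | _, _ => false
  end.

Definition dpath (Q : E -> R) (vs : seq N) (es : seq E) : bool :=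
  [&& dwalk Q s0 vs es, last s0 vs == s1 & uniq (s0 :: vs)].

Definition acyclic_flow (Q : E -> R) : Prop :=
  forall x vs es, dwalk Q x vs es -> last x vs = x -> es = [::].

End Physarum.

(* A flow Q orients
   each edge with Q e <> 0 along its flow; a potential p is *tight* for Q when
   it drops by exactly L e along every oriented edge e.  Equilibria are exactly
   the vectors |Q| for unit s0-s1 flows Q admitting a tight potential.  A tight
   potential makes the orientation acyclic and gives all directed s0-s1 paths
   length p s0 - p s1; conversely, in an acyclic unit flow every oriented edge
   lies on a directed s0-s1 path, so if these paths all have the same length,
   the length of a walk to the sink is a tight potential: this is part (b).
   The same path property shows that no flow enters s0, so the cut around s0
   carries one unit while every cut carries at least one: part (a).  With
   distinct path lengths the equilibrium flow has a single directed path, and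
   cutting at the potential of an edge shows it carries one unit; conversely
   a path indicator, with remaining path length as potential, solves the
   potential equations. *)

From HB Require Import structures.
From mathcomp Require Import all_boot all_order all_algebra.
From mathcomp Require Import ring lra zify.
From Stdlib Require Import ClassicalEpsilon.
Import Order.TTheory GRing.Theory Num.Theory.
Set Implicit Arguments. Unset Strict Implicit. Unset Printing Implicit Defensive.
Local Open Scope ring_scope.

Section DirectedWalks.
Variables (R : realFieldType) (N E : finType) (src tgt : E -> N) (Q : E -> R).
Local Notation dlk := (dlink src tgt Q).
Local Notation dwk := (dwalk src tgt Q).

Lemma dwalk_size x vs es : dwk x vs es -> size vs = size es.
Proof. by elim: vs x es => [|v vs IH] x [|e es] //= /andP[_ /IH ->]. Qed.

Lemma dwalk_cat x vs1 es1 vs2 es2 : size vs1 = size es1 ->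
  dwk x (vs1 ++ vs2) (es1 ++ es2) = dwk x vs1 es1 && dwk (last x vs1) vs2 es2.
Proof.
elim: vs1 x es1 => [|v vs IH] x [|e es] //= [Hsize].
by rewrite IH // andbA.
Qed.

Lemma dwalk_rcons x vs es e v : dwk x vs es -> dlk e (last x vs) v ->
  dwk x (rcons vs v) (rcons es e).
Proof.
move=> Hw He; rewrite -!cats1 dwalk_cat ?Hw /= ?He //; exact: dwalk_size Hw.
Qed.

Lemma dwalk_prefix x vs es y : dwk x vs es -> y \in vs ->
  exists vs1 es1, [/\ dwk x vs1 es1, last x vs1 = y & es1 != [::]].
Proof.
elim: vs x es => [|v vs IH] x [|e es] //= /andP[He Hw].
rewrite in_cons => /orP[/eqP->|Hy]; first by exists [:: v], [:: e]; rewrite /= He.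
have [vs1 [es1 [H1 H2 H3]]] := IH _ _ Hw Hy.
by exists (v :: vs1), (e :: es1); rewrite /= He H1.
Qed.

Lemma dwalk_uniq x vs es : acyclic_flow src tgt Q -> dwk x vs es -> uniq (x :: vs).
Proof.
move=> Hac; elim: vs x es => [|v vs IH] x [|e es] //= /andP[He Hw].
rewrite -/(uniq (v :: vs)) (IH _ _ Hw) andbT; apply/negP => Hx.
have Hw' : dwk x (v :: vs) (e :: es) by rewrite /= He Hw.
have [vs1 [es1 [H1 H2 H3]]] := dwalk_prefix Hw' Hx.
by move: H3; rewrite (Hac _ _ _ H1 H2).
Qed.

Lemma dwalk_size_bound x vs es : acyclic_flow src tgt Q -> dwk x vs es ->
  (size vs < #|N|)%N.
Proof.
move=> Hac Hw; have := max_card (mem (x :: vs)).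
by rewrite (card_uniqP (dwalk_uniq Hac Hw)) /=.
Qed.

Lemma dlink_support e x y : dlk e x y -> Q e != 0.
Proof. by case/andP. Qed.

Lemma support_dlink e : Q e != 0 -> exists x y, dlk e x y.
Proof.
move=> Hq; case: (boolP (0 < Q e)) => Hpos.
  by exists (src e), (tgt e); rewrite /dlink Hq Hpos !eqxx.
by exists (tgt e), (src e); rewrite /dlink Hq (negbTE Hpos) !eqxx.
Qed.

Lemma dwalk_support x vs es e : dwk x vs es -> e \in es -> Q e != 0.
Proof.
elim: vs x es => [|v vs IH] x [|f es] //= /andP[Hf Hw].
rewrite in_cons => /orP[/eqP->|He]; [exact: dlink_support Hf | exact: IH Hw He].
Qed.

Lemma dlink_links e x y : dlk e x y -> links src tgt e x y.
Proof.
by rewrite /dlink /links => /andP[_]; case: ifP => _ /andP[-> ->]; rewrite ?orbT.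
Qed.

Lemma dwalk_uwalk x vs es : dwk x vs es -> uwalk src tgt x vs es.
Proof.
elim: vs x es => [|v vs IH] x [|e es] //= /andP[He Hw].
by rewrite (dlink_links He) (IH _ _ Hw).
Qed.

End DirectedWalks.

Section FlowReversal.
Variables (R : realFieldType) (N E : finType) (src tgt : E -> N) (Q : E -> R).

Lemma dlink_opp e x y : dlink src tgt (fun f => - Q f) e x y = dlink src tgt Q e y x.
Proof.
rewrite /dlink oppr_eq0 oppr_gt0; by case: (ltgtP (Q e) 0) => HQ //=; rewrite andbC.
Qed.

Lemma st_flow_opp s0 s1 : s0 != s1 -> st_flow src tgt s0 s1 Q ->
  st_flow src tgt s1 s0 (fun f => - Q f).
Proof.
move=> Hs Hf v; rewrite !sumrN opprK addrC -opprB Hf /bvec.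
case: ifP => [/eqP ->|_]; first by rewrite ?(negbTE Hs) ?eqxx.
by case: ifP; rewrite ?opprK ?oppr0.
Qed.

End FlowReversal.

Section UnitFlows.
Variables (R : realFieldType) (N E : finType) (src tgt : E -> N) (Q : E -> R).
Variables s0 s1 : N.
Hypothesis Hflow : st_flow src tgt s0 s1 Q.
Local Notation dlk := (dlink src tgt Q).

Definition outflow (z : N) (e : E) : R :=
  Q e * ((src e == z)%:R - (tgt e == z)%:R).

Lemma net_outflow z : \sum_e outflow z e = bvec R s0 s1 z.
Proof.
rewrite -(Hflow z) !(big_mkcond (fun e => _ == z)) -sumrB.
by apply: eq_bigr => e _; rewrite /outflow; case: eqP; case: eqP => _ _ /=; ring.
Qed.

Lemma outflow_pos z e : 0 < outflow z e -> exists u, dlk e z u.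
Proof.
rewrite /outflow /dlink; case: (eqVneq (src e) z) => _; case: (eqVneq (tgt e) z) => _;
  rewrite /= ?subrr ?mulr0 ?ltxx // ?subr0 ?mulr1 ?sub0r ?mulrN1 ?oppr_gt0 => HQ.
- by exists (tgt e); rewrite gt_eqF // HQ eqxx.
- by exists (src e); rewrite lt_eqF //= ltNge (ltW HQ) eqxx.
Qed.

Definition has_out (z : N) : bool := [exists e, exists u, dlk e z u].
Definition has_in (z : N) : bool := [exists e, exists w, dlk e w z].

Lemma no_out_outflow z e : ~~ has_out z -> outflow z e <= 0.
Proof.
move=> Hno; rewrite leNgt; apply/negP => /outflow_pos [u Hu].
by case/negP: Hno; apply/existsP; exists e; apply/existsP; exists u.
Qed.

Lemma inlink_outflow z e w : dlk e w z -> w != z -> outflow z e < 0.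
Proof.
rewrite /outflow /dlink => /andP[HQ0]; case: ifP => HQ /andP[/eqP-> /eqP->] Hwz.
  by rewrite (negbTE Hwz) eqxx sub0r mulrN1 oppr_lt0.
rewrite (negbTE Hwz) eqxx subr0 mulr1 lt_neqAle HQ0 leNgt HQ //.
Qed.

Lemma sink_of_no_out z e w : dlk e w z -> ~~ has_out z -> z = s1.
Proof.
move=> He Hno.
have Hwz : w != z.
  apply/negP => /eqP Hw; case/negP: Hno; apply/existsP; exists e.
  by apply/existsP; exists z; rewrite -[X in dlk _ X _]Hw.
have Hneg : bvec R s0 s1 z < 0.
  rewrite -net_outflow (bigD1 e) //=.
  have := inlink_outflow He Hwz.
  have : \sum_(f | f != e) outflow z f <= 0.
    by apply: sumr_le0 => f _; exact: no_out_outflow.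
  lra.
move: Hneg; rewrite /bvec; case: eqP => _; first by rewrite ltr10.
by case: eqP => // _; rewrite ltxx.
Qed.

Lemma source_has_out : has_out s0.
Proof.
apply: contraT => Hno; have := net_outflow s0; rewrite /bvec eqxx => H1.
have : \sum_e outflow s0 e <= 0 by apply: sumr_le0 => e _; exact: no_out_outflow.
lra.
Qed.

End UnitFlows.

Lemma source_of_no_in (R : realFieldType) (N E : finType) (src tgt : E -> N)
    (Q : E -> R) s0 s1 z e u :
  s0 != s1 -> st_flow src tgt s0 s1 Q -> dlink src tgt Q e z u ->
  ~~ has_in src tgt Q z -> z = s0.
Proof.
move=> Hs Hf He Hno; apply: (sink_of_no_out (st_flow_opp Hs Hf) (w := u) (e := e)).
  by rewrite dlink_opp.
by apply: contra Hno => /existsP[f /existsP[w Hw]]; apply/existsP; exists f;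
  apply/existsP; exists w; rewrite -dlink_opp.
Qed.

Section AcyclicUnitFlows.
Variables (R : realFieldType) (N E : finType) (src tgt : E -> N) (Q : E -> R).
Variables s0 s1 : N.
Hypothesis Hs : s0 != s1.
Hypothesis Hflow : st_flow src tgt s0 s1 Q.
Hypothesis Hac : acyclic_flow src tgt Q.
Local Notation dlk := (dlink src tgt Q).
Local Notation dwk := (dwalk src tgt Q).

(* A walk whose last vertex is entered by an oriented edge extends to the sink:
   follow outgoing edges until none is left, which happens within #|N| steps. *)
Lemma reach_sink n x vs es : dwk x vs es -> (exists e w, dlk e w (last x vs)) ->
  (#|N| <= size vs + n)%N ->
  exists vs' es', dwk (last x vs) vs' es' /\ last (last x vs) vs' = s1.
Proof.
elim: n vs es => [|n IH] vs es Hw [e [w He]] Hn.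
  by have := dwalk_size_bound Hac Hw; lia.
case: (boolP (has_out src tgt Q (last x vs))) => [/existsP[f /existsP[u Hf]]|Hno].
  have [|||vs' [es' [Hw' Hl']]] := IH (rcons vs u) (rcons es f).
  - exact: dwalk_rcons.
  - by exists f, (last x vs); rewrite last_rcons.
  - by rewrite size_rcons addSnnS.
  by exists (u :: vs'), (f :: es'); rewrite last_rcons in Hw' Hl'; rewrite /= Hf Hw'.
by exists [::], [::]; split => //=; apply: (sink_of_no_out Hflow He Hno).
Qed.

(* Symmetrically, a walk whose first vertex is left by an oriented edge is
   reached from the source, by following incoming edges backwards. *)
Lemma reach_source n z vs es : dwk z vs es -> (exists e u, dlk e z u) ->
  (#|N| <= size vs + n)%N ->
  exists vs' es', dwk s0 vs' es' /\ last s0 vs' = last z vs.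
Proof.
elim: n z vs es => [|n IH] z vs es Hw [e [u He]] Hn.
  by have := dwalk_size_bound Hac Hw; lia.
case: (boolP (has_in src tgt Q z)) => [/existsP[f /existsP[w Hf]]|Hno].
  apply: (IH w (z :: vs) (f :: es)) => /=; first by rewrite Hf Hw.
    by exists f, z.
  by rewrite addSnnS.
by exists vs, es; rewrite -(source_of_no_in Hs Hflow He Hno).
Qed.

Lemma dlink_between e x y : dlk e x y -> exists vs0 es0 vs1 es1,
  [/\ dwk s0 vs0 es0, last s0 vs0 = x, dwk y vs1 es1 & last y vs1 = s1].
Proof.
move=> He; have Hw : dwk x [:: y] [:: e] by rewrite /= He.
have [vs1 [es1 [Hw1 Hl1]]] := @reach_sink #|N| x [:: y] [:: e] Hw
  (ex_intro _ e (ex_intro _ x He)) (leq_addl _ _).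
have [vs0 [es0 [Hw0 Hl0]]] := @reach_source #|N| x [::] [::] isT
  (ex_intro _ e (ex_intro _ y He)) (leqnn _).
by exists vs0, es0, vs1, es1.
Qed.

Lemma dwalk_dpath vs es : dwk s0 vs es -> last s0 vs = s1 ->
  dpath src tgt s0 s1 Q vs es.
Proof. by move=> Hw Hl; rewrite /dpath Hw Hl eqxx (dwalk_uniq Hac Hw). Qed.

Lemma dlink_on_dpath e x y : dlk e x y ->
  exists vs es, dpath src tgt s0 s1 Q vs es /\ e \in es.
Proof.
move=> He; have [vs0 [es0 [vs1 [es1 [Hw0 Hl0 Hw1 Hl1]]]]] := dlink_between He.
exists (vs0 ++ y :: vs1), (es0 ++ e :: es1); split; last by rewrite mem_cat mem_head orbT.
apply: dwalk_dpath; last by rewrite last_cat Hl0.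
by rewrite dwalk_cat ?(dwalk_size Hw0) // Hw0 Hl0 /= He Hw1.
Qed.

(* No oriented edge enters the source: it would close a directed cycle. *)
Lemma no_dlink_into_source e x : ~~ dlk e x s0.
Proof.
apply/negP => He; have [vs0 [es0 [vs1 [es1 [Hw0 Hl0 _ _]]]]] := dlink_between He.
have Hw : dwk s0 (rcons vs0 s0) (rcons es0 e) by apply: dwalk_rcons; rewrite ?Hl0.
by have := Hac Hw (last_rcons _ _ _); case: (es0).
Qed.

End AcyclicUnitFlows.

Section Cuts.
Variables (R : realFieldType) (N E : finType) (src tgt : E -> N).
Variables (Q : E -> R) (s0 s1 : N).
Hypothesis Hflow : st_flow src tgt s0 s1 Q.
Hypothesis Hs : s0 != s1.

Definition crosses (S : {set N}) (f : E) : bool := (src f \in S) != (tgt f \in S).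
Definition cut_sign (S : {set N}) (e : E) : R := (src e \in S)%:R - (tgt e \in S)%:R.

Lemma cut_sign0 S f : ~~ crosses S f -> cut_sign S f = 0.
Proof.
by rewrite /crosses /cut_sign; case: (_ \in _); case: (_ \in _); rewrite //= subrr.
Qed.

Lemma norm_cut_sign S f : crosses S f -> `|cut_sign S f| = 1.
Proof.
rewrite /crosses /cut_sign; case: (_ \in _); case: (_ \in _) => //= _.
  by rewrite subr0 normr1.
by rewrite sub0r normrN normr1.
Qed.

Lemma sum_indicator_in (a : N) (S : {set N}) :
  \sum_(v in S) ((a == v)%:R : R) = (a \in S)%:R.
Proof.
case: (boolP (a \in S)) => Ha.
  rewrite (bigD1 a) //= eqxx big1 ?addr0 // => v /andP[_ Hv].
  by rewrite eq_sym (negbTE Hv).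
by rewrite big1 // => v Hv; case: eqP => // Hav; rewrite Hav Hv in Ha.
Qed.

Lemma flow_across_cut (S : {set N}) : s0 \in S -> s1 \notin S ->
  \sum_e Q e * cut_sign S e = 1.
Proof.
move=> HS0 HS1.
have -> : 1 = \sum_(v in S) bvec R s0 s1 v.
  rewrite (bigD1 s0) //= /bvec eqxx big1 ?addr0 // => v /andP[Hv /negbTE ->].
  by case: eqP => // Hv1; rewrite Hv1 (negbTE HS1) in Hv.
rewrite -(eq_bigr _ (fun v _ => net_outflow Hflow v)) exchange_big.
by apply: eq_bigr => e _; rewrite /outflow -mulr_sumr sumrB !sum_indicator_in.
Qed.

Lemma cut_norm (D : E -> R) (S : {set N}) : (forall e, D e = `|Q e|) ->
  cut src tgt D S = \sum_e `|Q e * cut_sign S e|.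
Proof.
move=> HD; rewrite /cut big_mkcond; apply: eq_bigr => e _; rewrite HD normrM.
case: ifP => Hc; first by rewrite norm_cut_sign // mulr1.
by rewrite cut_sign0 ?negbT // normr0 mulr0.
Qed.

Lemma cut_ge1 (D : E -> R) (S : {set N}) : (forall e, D e = `|Q e|) ->
  s0 \in S -> s1 \notin S -> 1 <= cut src tgt D S.
Proof.
move=> HD HS0 HS1; rewrite (cut_norm _ HD) -[X in X <= _]normr1.
by rewrite -(flow_across_cut HS0 HS1) ler_norm_sum.
Qed.

(* If the orientation is acyclic, no flow enters s0, so the cut around the
   source has capacity exactly one. *)
Lemma source_cut (D : E -> R) : acyclic_flow src tgt Q ->
  (forall e, D e = `|Q e|) -> cut src tgt D [set s0] = 1.
Proof.
move=> Hac HD; rewrite (cut_norm _ HD) -(@flow_across_cut [set s0]) ?inE ?eqxx //;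
  last by rewrite eq_sym.
apply: eq_bigr => e _; rewrite ger0_norm // leNgt; apply/negP => Hneg.
have : 0 < outflow src tgt (fun f => - Q f) s0 e.
  by move: Hneg; rewrite /outflow /cut_sign !inE mulNr oppr_gt0.
case/outflow_pos => w; rewrite dlink_opp.
by apply/negP; exact: no_dlink_into_source Hs Hflow Hac e w.
Qed.

End Cuts.

Section TightPotentials.
Variables (R : realFieldType) (N E : finType) (src tgt : E -> N) (L : E -> R).
Hypothesis HL : forall e, 0 < L e.

Definition tight (Q : E -> R) (p : N -> R) : Prop :=
  forall e x y, dlink src tgt Q e x y -> p x - p y = L e.

Lemma plen_ge0 es : 0 <= plen L es.
Proof. by apply: sumr_ge0 => e _; exact: ltW. Qed.

Lemma plen_gt0 es : es != [::] -> 0 < plen L es.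
Proof.
case: es => // e es _; rewrite /plen big_cons -/(plen L es).
by apply: ltr_pwDl (HL e) (plen_ge0 es).
Qed.

Lemma tight_walk_len Q p x vs es : tight Q p -> dwalk src tgt Q x vs es ->
  p x - p (last x vs) = plen L es.
Proof.
move=> Hp; elim: vs x es => [|v vs IH] x [|e es] //=; first by rewrite subrr /plen big_nil.
move=> /andP[He Hw]; rewrite /plen big_cons -/(plen L es) -(IH _ _ Hw) -(Hp _ _ _ He).
by rewrite addrA subrK.
Qed.

(* Hence a closed directed walk has length zero: the orientation is acyclic. *)
Lemma tight_acyclic Q p : tight Q p -> acyclic_flow src tgt Q.
Proof.
move=> Hp x vs es Hw Hl; apply/eqP; apply: contraT => Hne.
by have := plen_gt0 Hne; rewrite -(tight_walk_len Hp Hw) Hl subrr ltxx.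
Qed.

Lemma tight_dpath_len Q p s0 s1 vs es : tight Q p ->
  dpath src tgt s0 s1 Q vs es -> plen L es = p s0 - p s1.
Proof. by move=> Hp /and3P[Hw /eqP Hl _]; rewrite -(tight_walk_len Hp Hw) Hl. Qed.

Lemma tight_elec_flow Q p D e : (forall e, D e = `|Q e|) -> tight Q p ->
  elec_flow src tgt L D p e = Q e.
Proof.
move=> HD Hp; have HLe := HL e; rewrite /elec_flow HD.
case: (ltgtP (Q e) 0) => HQ; last by rewrite HQ normr0 !mul0r.
- have Hd : dlink src tgt Q e (tgt e) (src e).
    by rewrite /dlink lt_eqF //= ltNge (ltW HQ) !eqxx.
  rewrite ltr0_norm // -opprB (Hp _ _ _ Hd); field; exact: lt0r_neq0.
- have Hd : dlink src tgt Q e (src e) (tgt e) by rewrite /dlink gt_eqF // HQ !eqxx.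
  rewrite gtr0_norm // (Hp _ _ _ Hd); field; exact: lt0r_neq0.
Qed.

(* Equilibria are exactly the vectors D = |Q| for a unit flow Q admitting a
   tight potential; the potential of the equilibrium is such a potential. *)
Lemma equilibrium_tight s0 s1 D : equilibrium src tgt L s0 s1 D <->
  exists Q p, [/\ st_flow src tgt s0 s1 Q, tight Q p & forall e, D e = `|Q e|].
Proof.
split=> [[p [Heq HD]]|[Q [p [Hflow Hp HD]]]].
  exists (elec_flow src tgt L D p), p; split => // [v|e x y He].
    rewrite -(Heq v) -sumrN; congr (_ + _); apply: eq_bigr => e /eqP <-;
      rewrite /elec_flow; ring.
  set q := elec_flow src tgt L D p e in He *; have HQ0 : q != 0 := dlink_support He.
  have Hrel : q * L e = `|q| * (p (src e) - p (tgt e)).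
    by rewrite -HD /q /elec_flow; field; exact: lt0r_neq0.
  apply: (mulfI HQ0); move: He; rewrite /dlink HQ0 /=.
  case: ifP => [Hpos|Hneg] /andP[/eqP<- /eqP<-]; first by rewrite Hrel gtr0_norm.
  have Hq : q < 0 by rewrite lt_neqAle HQ0 leNgt Hneg.
  by rewrite Hrel ltr0_norm // mulNr -mulrN opprB.
exists p; split => [v|e]; last by rewrite (tight_elec_flow _ HD Hp) HD.
rewrite -(Hflow v) -sumrN; congr (_ + _); apply: eq_bigr => e /eqP <-;
  rewrite -(tight_elec_flow e HD Hp) /elec_flow; ring.
Qed.

End TightPotentials.

Section PotentialFromPaths.
Variables (R : realFieldType) (N E : finType) (src tgt : E -> N) (L : E -> R).
Variables (Q : E -> R) (s0 s1 : N).
Hypothesis Hs : s0 != s1.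
Hypothesis Hflow : st_flow src tgt s0 s1 Q.
Hypothesis Hac : acyclic_flow src tgt Q.
Hypothesis Hequal : forall vs1 es1 vs2 es2,
  dpath src tgt s0 s1 Q vs1 es1 -> dpath src tgt s0 s1 Q vs2 es2 ->
  plen L es1 = plen L es2.
Local Notation dwk := (dwalk src tgt Q).

(* A chosen directed walk from x to the sink, when there is one. *)
Definition walk_to_sink (x : N) : seq N * seq E :=
  epsilon (inhabits ([::], [::])) (fun w => dwk x w.1 w.2 && (last x w.1 == s1)).

Lemma walk_to_sinkP x vs es : dwk x vs es -> last x vs = s1 ->
  dwk x (walk_to_sink x).1 (walk_to_sink x).2 /\ last x (walk_to_sink x).1 = s1.
Proof.
move=> Hw Hl; suff /andP[-> /eqP ->] :
    dwk x (walk_to_sink x).1 (walk_to_sink x).2 && (last x (walk_to_sink x).1 == s1)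
  by [].
apply: (epsilon_spec (inhabits ([::], [::]))
  (fun w => dwk x w.1 w.2 && (last x w.1 == s1))).
by exists (vs, es); rewrite /= Hw Hl eqxx.
Qed.

(* The distance to the sink along chosen walks is a tight potential: since all
   directed s0-s1 paths have the same length, for an oriented edge from x to y
   the chosen walks from x and from y differ in length by exactly L e. *)
Lemma tight_potential_exists : exists p, tight src tgt L Q p.
Proof.
exists (fun x => plen L (walk_to_sink x).2) => e x y He.
have [vs0 [es0 [vs1 [es1 [Hw0 Hl0 Hw1 Hl1]]]]] := dlink_between Hs Hflow Hac He.
have Hxy : dwk x (y :: vs1) (e :: es1) by rewrite /= He Hw1.
have [Hwx Hlx] := walk_to_sinkP Hxy Hl1.
have [Hwy Hly] := walk_to_sinkP Hw1 Hl1.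
have Hsize := dwalk_size Hw0.
have Px : dpath src tgt s0 s1 Q (vs0 ++ (walk_to_sink x).1) (es0 ++ (walk_to_sink x).2).
  by apply: (dwalk_dpath Hac); rewrite ?dwalk_cat ?Hw0 ?Hl0 ?Hwx // last_cat Hl0.
have Py : dpath src tgt s0 s1 Q (vs0 ++ y :: (walk_to_sink y).1)
                               (es0 ++ e :: (walk_to_sink y).2).
  by apply: (dwalk_dpath Hac); rewrite ?dwalk_cat ?Hw0 ?Hl0 /= ?He ?Hwy // last_cat Hl0.
have := Hequal Px Py; rewrite /plen !big_cat big_cons /=.
by move/addrI => ->; rewrite addrK.
Qed.

End PotentialFromPaths.

Section LevelCuts.
Variables (R : realFieldType) (N E : finType) (src tgt : E -> N) (L : E -> R).
Hypothesis HL : forall e, 0 < L e.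
Variables (Q : E -> R) (p : N -> R).
Hypothesis Hp : tight src tgt L Q p.
Local Notation dlk := (dlink src tgt Q).
Local Notation dwk := (dwalk src tgt Q).

Definition level (t : R) : {set N} := [set v | t <= p v].

Lemma dlink_crosses S f a b : dlk f a b ->
  crosses src tgt S f = ((a \in S) != (b \in S)).
Proof.
rewrite /crosses /dlink => /andP[_]; case: ifP => _ /andP[/eqP-> /eqP->] //.
by rewrite eq_sym.
Qed.

(* The potential strictly decreases along a directed walk, so the walk crosses
   each level set at most once, and never if it starts below the level. *)
Lemma level_crossing t z vs es : dwk z vs es ->
  (z \notin level t -> forall f, f \in es -> ~~ crosses src tgt (level t) f) /\
  (forall f1 f2, f1 \in es -> f2 \in es ->
     crosses src tgt (level t) f1 -> crosses src tgt (level t) f2 -> f1 = f2).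
Proof.
elim: vs z es => [|v vs IH] z [|f es] //= /andP[Hf Hw].
have Hpv : p v < p z by have := Hp Hf; have := HL f; lra.
have [IH1 IH2] := IH v es Hw; have Hcf := dlink_crosses (level t) Hf.
have Hbelow : z \notin level t -> v \notin level t.
  by rewrite !inE -!ltNge => Hz; apply: lt_trans Hpv Hz.
split => [Hz g|g1 g2].
  rewrite in_cons => /orP[/eqP->|]; last exact: IH1 (Hbelow Hz) g.
  by rewrite Hcf (negbTE Hz) (negbTE (Hbelow Hz)).
case: (boolP (v \in level t)) => Hv.
  have Hz : z \in level t by move: Hv; rewrite !inE => /le_trans; apply; exact: ltW.
  have Hnf : ~~ crosses src tgt (level t) f by rewrite Hcf Hz Hv.
  rewrite !in_cons => /orP[/eqP->|H1]; first by rewrite (negbTE Hnf).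
  by move=> /orP[/eqP->|H2]; [move=> _; rewrite (negbTE Hnf) | exact: IH2].
rewrite !in_cons => /orP[/eqP->|H1] /orP[/eqP->|H2] //.
- by move=> _ Hc; move: (IH1 Hv _ H2); rewrite Hc.
- by move=> Hc; move: (IH1 Hv _ H1); rewrite Hc.
- by move=> Hc; move: (IH1 Hv _ H1); rewrite Hc.
Qed.

(* If a unit flow with a tight potential is supported on a single directed
   s0-s1 path, it carries exactly one unit on each edge of that path: cut at
   the level of the tail of an edge e; the path crosses this cut only along e,
   so e carries all the flow across it. *)
Lemma unit_on_support_path s0 s1 vs es : s0 != s1 -> st_flow src tgt s0 s1 Q ->
  dpath src tgt s0 s1 Q vs es -> (forall f, Q f != 0 -> f \in es) ->
  forall e, e \in es -> `|Q e| = 1.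
Proof.
move=> Hs Hflow /and3P[HwP _ _] Hsupp e He.
have [x [y Hxy]] := support_dlink src tgt (dwalk_support HwP He).
have [vs0 [es0 [vs1 [es1 [Hw0 Hl0 Hw1 Hl1]]]]] :=
  dlink_between Hs Hflow (tight_acyclic HL Hp) Hxy.
have := tight_walk_len Hp Hw0; have := tight_walk_len Hp Hw1; rewrite Hl0 Hl1.
have := Hp Hxy; have := plen_ge0 HL es0; have := plen_ge0 HL es1; have := HL e.
move=> HLe Hes1 Hes0 Hdrop Hy1 Hx0; set S := level (p x).
have HS0 : s0 \in S by rewrite inE; lra.
have HS1 : s1 \notin S by rewrite inE -ltNge; lra.
have Hce : crosses src tgt S e by rewrite (dlink_crosses _ Hxy) !inE lexx -ltNge; lra.
have Hothers f : f != e -> Q f * cut_sign R src tgt S f = 0.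
  move=> Hfe; case: (eqVneq (Q f) 0) => [->|Hqf]; first by rewrite mul0r.
  rewrite cut_sign0 ?mulr0 //; apply: contra Hfe => Hcf.
  by rewrite ((level_crossing (p x) HwP).2 f e (Hsupp _ Hqf) He Hcf Hce).
have := flow_across_cut Hflow HS0 HS1; rewrite (bigD1 e) //= big1 ?addr0 //.
by move/(congr1 Num.norm); rewrite normrM norm_cut_sign // mulr1 normr1.
Qed.

End LevelCuts.

Section UniquePath.
Variables (R : realFieldType) (N E : finType) (src tgt : E -> N) (L : E -> R).
Hypothesis HL : forall e, 0 < L e.
Variables s0 s1 : N.
Hypothesis Hs : s0 != s1.

Definition indicator (es : seq E) (e : E) : R := if e \in es then 1 else 0.

Lemma dpath_upath (Q : E -> R) vs es :
  dpath src tgt s0 s1 Q vs es -> upath src tgt s0 s1 vs es.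
Proof. by case/and3P => Hw Hl Hu; rewrite /upath (dwalk_uwalk Hw) Hl Hu. Qed.

(* When distinct s0-s1 paths have distinct lengths, an equilibrium is the
   indicator of a path: all directed paths of the equilibrium flow have the
   same length, hence there is only one, it carries the whole support, and the
   flow is one on each of its edges. *)
Lemma equilibrium_path (D : E -> R) :
  (forall vs1 es1 vs2 es2,
     upath src tgt s0 s1 vs1 es1 -> upath src tgt s0 s1 vs2 es2 ->
     es1 != es2 -> plen L es1 != plen L es2) ->
  equilibrium src tgt L s0 s1 D ->
  exists vs es, upath src tgt s0 s1 vs es /\ forall e, D e = indicator es e.
Proof.
move=> Hdist /(equilibrium_tight src tgt HL) [Q [p [Hflow Hp HD]]].
have Hac := tight_acyclic HL Hp.
have /existsP[e0 /existsP[u Hu]] := source_has_out Hflow.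
have [_ [_ [vs1 [es1 [_ _ Hw1 Hl1]]]]] := dlink_between Hs Hflow Hac Hu.
have HP : dpath src tgt s0 s1 Q (u :: vs1) (e0 :: es1).
  by apply: (dwalk_dpath Hac); rewrite /= ?Hu ?Hw1.
have Hunique vs es : dpath src tgt s0 s1 Q vs es -> es = e0 :: es1.
  move=> Hd; apply/eqP; apply: contraT => Hne.
  have := Hdist _ _ _ _ (dpath_upath Hd) (dpath_upath HP) Hne.
  by rewrite (tight_dpath_len Hp Hd) (tight_dpath_len Hp HP) eqxx.
have Hsupp f : Q f != 0 -> f \in e0 :: es1.
  move=> /(support_dlink src tgt) [x [y /(dlink_on_dpath Hs Hflow Hac)]].
  by case=> vs [es [Hd Hf]]; rewrite -(Hunique _ _ Hd).
exists (u :: vs1), (e0 :: es1); split; first exact: dpath_upath HP.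
move=> e; rewrite HD /indicator; case: ifP => He.
  exact: (unit_on_support_path HL Hp Hs Hflow HP Hsupp).
by apply/eqP; rewrite normr_eq0; apply: contraFT He; exact: Hsupp.
Qed.

End UniquePath.

Section PathEquilibrium.
Variables (R : realFieldType) (N E : finType) (src tgt : E -> N) (L : E -> R).
Hypothesis HL : forall e, 0 < L e.

Fixpoint walk_drops (p : N -> R) (x : N) (vs : seq N) (es : seq E) : Prop :=
  match vs, es with
  | v :: vs', e :: es' => p x - p v = L e /\ walk_drops p v vs' es'
  | _, _ => True
  end.

(* The length of the rest of the walk after vertex u (zero off the walk). *)
Fixpoint remaining_length (x : N) (vs : seq N) (es : seq E) : N -> R :=
  match vs, es with
  | v :: vs', e :: es' => fun u =>
      if u == x then L e + remaining_length v vs' es' v else remaining_length v vs' es' u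
  | _, _ => fun _ => 0
  end.

Lemma walk_drops_ext p q x vs es : {in x :: vs, p =1 q} ->
  walk_drops p x vs es -> walk_drops q x vs es.
Proof.
elim: vs x es => [|v vs IH] x [|e es] //= Hpq [Hd Hw]; split.
  by rewrite -!Hpq ?mem_head // in_cons mem_head orbT.
by apply: IH Hw => u Hu; apply: Hpq; rewrite in_cons Hu orbT.
Qed.

Lemma remaining_length_drops x vs es : uniq (x :: vs) ->
  walk_drops (remaining_length x vs es) x vs es.
Proof.
elim: vs x es => [|v vs IH] x [|e es] //= /andP[Hx Hu]; split.
  rewrite eqxx ifN_eq ?addrK //.
  by apply: contra Hx => /eqP->; rewrite mem_head.
apply: walk_drops_ext (IH v es Hu) => u Hu'.
by rewrite ifN_eq //; apply: contra Hx => /eqP <-.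
Qed.

Lemma walk_drops_edge p x vs es f : uwalk src tgt x vs es -> walk_drops p x vs es ->
  f \in es -> `|p (src f) - p (tgt f)| = L f.
Proof.
elim: vs x es => [|v vs IH] x [|e es] //= /andP[Hl Hw] [Hd Hg].
rewrite in_cons => /orP[/eqP->|Hf]; last exact: IH Hw Hg Hf.
move: Hl; rewrite /links => /orP[] /andP[/eqP-> /eqP->]; last rewrite -opprB normrN;
  by rewrite Hd gtr0_norm.
Qed.

Lemma uwalk_ends x vs es f : uwalk src tgt x vs es -> f \in es ->
  (src f \in x :: vs) && (tgt f \in x :: vs).
Proof.
elim: vs x es => [|v vs IH] x [|g es] //= /andP[Hl Hw].
rewrite in_cons => /orP[/eqP->|Hf].
  by move: Hl; rewrite /links => /orP[] /andP[/eqP-> /eqP->]; rewrite !in_cons !eqxx !orbT.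
have /andP[Hs Ht] := IH _ _ Hw Hf.
by rewrite [src f \in _]in_cons [tgt f \in _]in_cons Hs Ht !orbT.
Qed.

Lemma uwalk_uniq_edges x vs es : uwalk src tgt x vs es -> uniq (x :: vs) -> uniq es.
Proof.
elim: vs x es => [|v vs IH] x [|e es] //= /andP[Hl Hw] /andP[Hx Hu].
rewrite (IH _ _ Hw Hu) andbT; apply/negP => He; have /andP[Hs Ht] := uwalk_ends Hw He.
move: Hl; rewrite /links => /orP[] /andP[/eqP Hse /eqP Hte].
  by rewrite -Hse Hs in Hx.
by rewrite -Hte Ht in Hx.
Qed.

Lemma potential_lhsE (D : E -> R) (p : N -> R) v :
  \sum_(e | src e == v) (p v - p (tgt e)) * (D e / L e)
  + \sum_(e | tgt e == v) (p v - p (src e)) * (D e / L e)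
  = \sum_e (p (src e) - p (tgt e)) / L e * D e * ((src e == v)%:R - (tgt e == v)%:R).
Proof.
rewrite !(big_mkcond (fun e => _ == v)) -big_split /=; apply: eq_bigr => e _.
by case: eqP => [<-|_]; case: eqP => [<-|_] /=; ring.
Qed.

Lemma edge_divergence (p : N -> R) e x y v : links src tgt e x y -> p x - p y = L e ->
  (p (src e) - p (tgt e)) / L e * ((src e == v)%:R - (tgt e == v)%:R)
  = (x == v)%:R - (y == v)%:R.
Proof.
have HLe := lt0r_neq0 (HL e).
rewrite /links => /orP[] /andP[/eqP-> /eqP->] Hd; first by rewrite Hd divff // mul1r.
by rewrite -opprB Hd mulNr divff // mulN1r opprB.
Qed.

(* Along a walk the unit divergences telescope. *)
Lemma walk_divergence (p : N -> R) x vs es v : uwalk src tgt x vs es ->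
  walk_drops p x vs es ->
  \sum_(e <- es) (p (src e) - p (tgt e)) / L e * ((src e == v)%:R - (tgt e == v)%:R)
  = (x == v)%:R - (last x vs == v)%:R.
Proof.
elim: vs x es => [|w vs IH] x [|e es] //=; first by rewrite big_nil subrr.
move=> /andP[Hl Hw] [Hd Hg]; rewrite big_cons (IH _ _ Hw Hg) (edge_divergence _ Hl Hd).
by rewrite addrA subrK.
Qed.

(* The indicator of a simple s0-s1 path is an equilibrium: its potential is
   the remaining length along the path. *)
Lemma path_equilibrium s0 s1 vs es (D : E -> R) : s0 != s1 ->
  upath src tgt s0 s1 vs es -> (forall e, D e = indicator R es e) ->
  equilibrium src tgt L s0 s1 D.
Proof.
move=> Hs /and3P[Hw /eqP Hl Hu] HD; set p := remaining_length s0 vs es.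
have Hd : walk_drops p s0 vs es := remaining_length_drops es Hu.
exists p; split => [v|e]; last first.
  rewrite /elec_flow !HD /indicator; case: ifP => He; last by rewrite !mul0r normr0.
  rewrite mul1r normrM normfV (walk_drops_edge Hw Hd He) gtr0_norm ?divff //.
  exact: lt0r_neq0.
rewrite potential_lhsE.
transitivity (\sum_(e <- es)
    (p (src e) - p (tgt e)) / L e * ((src e == v)%:R - (tgt e == v)%:R)).
  rewrite (big_uniq _ (uwalk_uniq_edges Hw Hu)) [RHS]big_mkcond /=.
  by apply: eq_bigr => e _; rewrite HD /indicator; case: ifP; rewrite ?mulr1 ?mulr0 ?mul0r.
rewrite (walk_divergence _ Hw Hd) Hl /bvec (eq_sym s0) (eq_sym s1).
have [->|_] := eqVneq v s0; first by rewrite (negbTE Hs) subr0.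
by case: (v == s1); rewrite /= ?mulr1n ?mulr0n ?sub0r ?subrr ?oppr0.
Qed.

End PathEquilibrium.

Lemma equilibrium_characterization (R : realFieldType) (N E : finType)
    (src tgt : E -> N) (L : E -> R) (s0 s1 : N) (D : E -> R) :
  s0 != s1 -> (forall e, 0 < L e) ->
  equilibrium src tgt L s0 s1 D <->
  exists Q : E -> R,
    [/\ st_flow src tgt s0 s1 Q, acyclic_flow src tgt Q, (forall e, D e = `|Q e|) &
        forall vs1 es1 vs2 es2,
          dpath src tgt s0 s1 Q vs1 es1 -> dpath src tgt s0 s1 Q vs2 es2 ->
          plen L es1 = plen L es2].
Proof.
move=> Hs HL; rewrite equilibrium_tight //; split.
  case=> Q [p [Hflow Hp HD]]; exists Q; split => //; first exact: tight_acyclic Hp.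
  by move=> vs1 es1 vs2 es2 H1 H2; rewrite (tight_dpath_len Hp H1) (tight_dpath_len Hp H2).
case=> Q [Hflow Hac HD Hequal]; have [p Hp] := tight_potential_exists Hs Hflow Hac Hequal.
by exists Q, p.
Qed.

Theorem mainTheorem3 (R : realFieldType) (N E : finType) (src tgt : E -> N)
    (L : E -> R) (s0 s1 : N)
    (Hs : s0 != s1)
    (Hloop : forall e, src e != tgt e)
    (Hconn : connected_graph src tgt)
    (HL : forall e, 0 < L e) :
  (* (a) *)
  (forall D : E -> R, equilibrium src tgt L s0 s1 D ->
     cut src tgt D [set s0] = 1 /\
     (forall S : {set N}, s0 \in S -> s1 \notin S ->
        cut src tgt D [set s0] <= cut src tgt D S)) /\
  (* (b) *)
  (forall D : E -> R, (forall e, 0 <= D e) ->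
     (equilibrium src tgt L s0 s1 D <->
      exists Q : E -> R,
        [/\ st_flow src tgt s0 s1 Q,
            acyclic_flow src tgt Q,
            (forall e, D e = `|Q e|) &
            (forall vs1 es1 vs2 es2,
               dpath src tgt s0 s1 Q vs1 es1 -> dpath src tgt s0 s1 Q vs2 es2 ->
               plen L es1 = plen L es2)])) /\
  (* (b), "in particular" *)
  ((forall vs1 es1 vs2 es2,
      upath src tgt s0 s1 vs1 es1 -> upath src tgt s0 s1 vs2 es2 ->
      es1 != es2 -> plen L es1 != plen L es2) ->
   forall D : E -> R, (forall e, 0 <= D e) ->
     (equilibrium src tgt L s0 s1 D <->
      exists vs es, upath src tgt s0 s1 vs es /\
        forall e, D e = if e \in es then 1 else 0)).
Proof.
split; [|split].
- move=> D /(equilibrium_characterization src tgt D Hs HL) [Q [Hflow Hac HD _]].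
  have Hsource := source_cut Hflow Hs Hac HD.
  by split=> // S HS0 HS1; rewrite Hsource; exact: cut_ge1 Hflow D S HD HS0 HS1.
- by move=> D _; apply: (equilibrium_characterization src tgt D Hs HL).
- move=> Hdist D _; split; first exact: (equilibrium_path HL Hs Hdist).
  by case=> vs [es [HP HD]]; exact: (path_equilibrium HL Hs HP HD).
Qed.
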